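(* Let $\mathcal{F}$ be the family of subsets $C\subset\mathbb{Z}^n$ that are bounded below, i.e. for which there exist $b_1,\dots,b_n\in\mathbb{Z}$ with $\alpha_i\ge b_i$ for all $\alpha\in C$ and all $i$. For $C\in\mathcal{F}$ define $m_C:\mathbb{Z}^n\to\mathbb{Z}$ by $m_C(\alpha)=\#\{i\in\{1,\dots,n\}\mid \alpha+e_i\in C\}$, i.e. $m_C=\sum_{i=1}^n\mathbb{1}_{C-e_i}$. Then the map $\mathcal{F}\to\{f:\mathbb{Z}^n\to\mathbb{Z}\}$, $C\mapsto m_C$, is injective.
   Context: $e_1,\dots,e_n$ denotes the standard basis of $\mathbb{Z}^n$ and $\mathbb{1}_X$ the indicator function of a set $X$. *)

From mathcomp Require Import all_boot all_order all_algebra.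
Set Implicit Arguments. Unset Strict Implicit. Unset Printing Implicit Defensive.
Import Order.TTheory GRing.Theory Num.Theory.
Local Open Scope ring_scope.

(* Points of Z^n are finite functions 'I_n -> int; subsets of Z^n are
   boolean predicates on them. *)
Definition pt (n : nat) := {ffun 'I_n -> int}.

Definition e_ (n : nat) (i : 'I_n) : pt n := [ffun j => ((i == j) : nat)%:Z].

Definition shift (n : nat) (alpha : pt n) (i : 'I_n) : pt n :=
  [ffun j => alpha j + e_ i j].

Definition bounded_below (n : nat) (C : pred (pt n)) : Prop :=
  exists b : pt n, forall alpha, C alpha -> forall i, b i <= alpha i.

Definition mC (n : nat) (C : pred (pt n)) : pt n -> int :=
  fun alpha => (#|[pred i : 'I_n | C (shift alpha i)]|)%:Z.

(** Suppose [C1] and [C2] differ and weigh points by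
    [w(a) = a_k + sum_j a_j] for a fixed coordinate [k].  Both sets are bounded
    below, so [w] is bounded below on their symmetric difference and we may take
    a point [a] of minimal weight in it.  Put [b = a - e_k]; then [b + e_k = a]
    while every other [b + e_i] has weight [w(a) - 1], hence lies in [C1] iff it
    lies in [C2].  Comparing [m_C1(b) = m_C2(b)] then forces [a] to lie in both
    or in neither, a contradiction. *)
From mathcomp Require Import all_boot all_order all_algebra.
From mathcomp Require Import zify.
From Stdlib Require Import FunctionalExtensionality.
Set Implicit Arguments. Unset Strict Implicit. Unset Printing Implicit Defensive.
Import Order.TTheory GRing.Theory Num.Theory.
Local Open Scope ring_scope.

Lemma lower_bounded_ind (T : Type) (f : T -> int) (P : pred T) (L : int) :
  (forall x, ~~ P x -> L <= f x) ->
  (forall x, (forall y, f y < f x -> P y) -> P x) ->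
  forall x, P x.
Proof.
move=> low ind.
have below (k : nat) x : f x < L + k%:Z -> P x.
  elim: k x => [|k IHk] x fx.
    by apply: contraLR fx => /low; rewrite -leNgt addr0.
  by apply: ind => y fy; apply: IHk; lia.
move=> x; apply: (below `|f x - L|.+1); rewrite -addn1 PoszD abszE.
by have := ler_norm (f x - L); lia.
Qed.

Definition unshift (n : nat) (a : pt n) (i : 'I_n) : pt n := [ffun j => a j - e_ i j].

Lemma sum_e (n : nat) (i : 'I_n) : \sum_j e_ i j = 1.
Proof.
rewrite (bigD1 i) //= big1 => [|j ji]; rewrite ffunE ?eqxx ?addr0 //.
by rewrite eq_sym (negPf ji).
Qed.

Lemma unshiftK (n : nat) (a : pt n) (i : 'I_n) : shift (unshift a i) i = a.
Proof. by apply/ffunP => j; rewrite !ffunE subrK. Qed.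

Section Weight.
Variables (n : nat) (k : 'I_n).

Definition weight (a : pt n) : int := a k + \sum_j a j.

Lemma weight_shift_unshift (a : pt n) (i : 'I_n) :
  i != k -> weight (shift (unshift a k) i) = weight a - 1.
Proof.
move=> ik; rewrite /weight !ffunE eqxx (negPf ik) addr0.
have -> : \sum_j shift (unshift a k) i j = \sum_j a j - \sum_j e_ k j + \sum_j e_ i j.
  by rewrite -sumrB -big_split /=; apply: eq_bigr => j _; rewrite !ffunE.
by rewrite !sum_e subrK; lia.
Qed.

Lemma weight_le (a b : pt n) : (forall i, b i <= a i) -> weight b <= weight a.
Proof. by move=> le_ba; rewrite lerD // ler_sum. Qed.

Lemma bounded_below_weight (C : pred (pt n)) :
  bounded_below C -> exists L, forall a, C a -> L <= weight a.
Proof. by case=> b Cb; exists (weight b) => a /Cb; apply: weight_le. Qed.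

End Weight.

Lemma mC_cardD1 (n : nat) (C : pred (pt n)) (a : pt n) (i : 'I_n) :
  mC C a = (C (shift a i) + #|[pred j | (j != i) && C (shift a j)]|)%:Z.
Proof. by rewrite /mC (cardD1 i) !inE. Qed.

Lemma mC_eq_agree (n : nat) (C1 C2 : pred (pt n)) (k : 'I_n) (a : pt n) :
  mC C1 = mC C2 ->
  (forall i, i != k -> C1 (shift (unshift a k) i) = C2 (shift (unshift a k) i)) ->
  C1 a = C2 a.
Proof.
move=> /(congr1 (fun m => m (unshift a k))) mC_b agree.
have same_rest : [pred j | (j != k) && C1 (shift (unshift a k) j)]
              =i [pred j | (j != k) && C2 (shift (unshift a k) j)].
  by move=> j; rewrite !inE; case: (eqVneq j k) => //= /agree ->.
move: mC_b; rewrite !(mC_cardD1 _ _ k) !unshiftK (eq_card same_rest).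
by case=> /addIn; case: (C1 a); case: (C2 a).
Qed.

Theorem proposition3p2 (n : nat) (hn : (0 < n)%N) (C1 C2 : pred (pt n)) :
  bounded_below C1 -> bounded_below C2 -> mC C1 = mC C2 -> C1 = C2.
Proof.
pose k := Ordinal hn.
move=> /(bounded_below_weight k) [L1 low1] /(bounded_below_weight k) [L2 low2] hm.
apply: functional_extensionality => a0; apply/eqP; move: a0.
apply: (lower_bounded_ind (f := weight k) (L := Order.min L1 L2)).
  move=> a ne; rewrite ge_min.
  have : C1 a || C2 a by move: ne; case: (C1 a); case: (C2 a).
  by case/orP => [/low1 | /low2] ->; rewrite ?orbT.
move=> a agree_lighter; apply/eqP; apply: (mC_eq_agree (k := k) hm) => i ik.
by apply/eqP/agree_lighter; rewrite weight_shift_unshift //; lia.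
Qed.
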